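(* Let $\mathcal{A}=\mathcal{A}(R,\boldsymbol{\sigma},\boldsymbol{t})$ and $\mathcal{A}'=\mathcal{A}(R,\boldsymbol{\sigma},\boldsymbol{t}')$ be two twisted generalized Weyl algebras of rank two (with $t_1,t_2$ regular in $R$ and satisfying the consistency equation) such that $t_i'=s_it_i$ for $i=1,2$, where $s_1,s_2$ are central invertible elements of $R$ satisfying $\sigma_2^{1/2}(s_1)\,\sigma_1^{1/2}(s_2)=\sigma_2^{-1/2}(s_1)\,\sigma_1^{-1/2}(s_2)$. Then $\mathcal{A}\simeq\mathcal{A}'$ as $\mathbb{Z}^2$-graded $R$-rings.
   Context: Let $\Bbbk$ be a field, $R$ a unital $\Bbbk$-algebra, $\sigma_1^{1/2},\sigma_2^{1/2}$ commuting automorphisms of $R$ ($\sigma_i=(\sigma_i^{1/2})^2$), $t_1,t_2\in Z(R)$. The TGWC $\tilde{\mathcal{A}}(R,\boldsymbol{\sigma},\boldsymbol{t})$ is obtained from $R$ by adjoining $X_1^\pm,X_2^\pm$ with relations $X_i^\pm r=\sigma_i^{\pm1}(r)X_i^\pm$, $X_i^\pm X_i^\mp=\sigma_i^{\pm1/2}(t_i)$, $[X_1^\pm,X_2^\mp]=0$, graded by $\deg r=0$, $\deg X_i^\pm=\pm\mathbf{e}_i$. The TGWA is $\tilde{\mathcal{A}}$ modulo the sum of all graded ideals meeting the degree-zero part trivially. Consistency equation (rank two): $\sigma_2^{1/2}(t_1)\sigma_1^{1/2}(t_2)=\sigma_2^{-1/2}(t_1)\sigma_1^{-1/2}(t_2)$;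 under it $R$ is identified with the degree-zero component. *)

From HB Require Import structures.
From mathcomp Require Import all_boot all_order all_algebra.
From mathcomp Require Import finmap.
From mathcomp.multinomials Require Import monalg.

Set Implicit Arguments.
Unset Strict Implicit.
Unset Printing Implicit Defensive.

Import Order.TTheory GRing.Theory Num.Theory.
Local Open Scope ring_scope.

(* A letter is a pair (idx, sgn): idx = false for index 1, true for    *)
(* index 2; sgn = true for "+", false for "-".                         *)
Definition letter := (bool * bool)%type.
Definition X1p : letter := (false, true).
Definition X1m : letter := (false, false).
Definition X2p : letter := (true, true).
Definition X2m : letter := (true, false).

Definition word := seq letter.

Definition deg_letter (a : letter) : int * int :=
  let s : int := if a.2 then 1 else -1 in
  if a.1 then (0, s) else (s, 0).

Definition deg_word (w : word) : int * int :=
  foldr (fun a d => ((deg_letter a).1 + d.1, (deg_letter a).2 + d.2)) (0, 0) w.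

Section SkewFree.
Variables (k : fieldType) (R : algType k).
(* sh1 = sigma_1^{1/2}, sh1i = its inverse, same for index 2 *)
Variables (sh1 sh1i sh2 sh2i : R -> R).

(* X_a r = letter_aut a (r) X_a *)
Definition letter_aut (a : letter) : R -> R :=
  match a with
  | (false, true)  => sh1 \o sh1
  | (false, false) => sh1i \o sh1i
  | (true, true)   => sh2 \o sh2
  | (true, false)  => sh2i \o sh2i
  end.

Definition word_aut (u : word) : R -> R :=
  foldr (fun a g => letter_aut a \o g) id u.

(* The skew free ring F = R<X_1^+, X_1^-, X_2^+, X_2^-> with relations
   X_a r = sigma_a(r) X_a : elements are finite R-combinations r * X_w of
   words w (coefficients written on the left). *)
Definition F := {malg R[word]}.

Definition mulF (x y : F) : F :=
  \sum_(u <- msupp x) \sum_(v <- msupp y)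
     << x@_u * word_aut u (y@_v) *g (u ++ v) >>.

Definition cF (r : R) : F := << r *g [::] >>.
Definition XF (a : letter) : F := << 1 *g [:: a] >>.
Definition oneF : F := cF 1.

Definition compF (d : int * int) (x : F) : F :=
  \sum_(w <- msupp x | deg_word w == d) << x@_w *g w >>.

Definition homogF (d : int * int) (x : F) : Prop :=
  forall w, w \in msupp x -> deg_word w = d.

Definition is_idealF (J : F -> Prop) : Prop :=
  [/\ J 0, (forall x y, J x -> J y -> J (x + y)), (forall x, J x -> J (- x)),
      (forall a x, J x -> J (mulF a x)) & (forall a x, J x -> J (mulF x a))].

Inductive idealF_gen (S : F -> Prop) : F -> Prop :=
  | igen_in x : S x -> idealF_gen S x
  | igen_0 : idealF_gen S 0
  | igen_add x y : idealF_gen S x -> idealF_gen S y -> idealF_gen S (x + y)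
  | igen_opp x : idealF_gen S x -> idealF_gen S (- x)
  | igen_lmul a x : idealF_gen S x -> idealF_gen S (mulF a x)
  | igen_rmul a x : idealF_gen S x -> idealF_gen S (mulF x a).

Variables (t1 t2 : R).

(* defining relations of the TGWC (besides X r = sigma(r) X, built into F) *)
Definition tgwc_rels (z : F) : Prop :=
     z = mulF (XF X1p) (XF X1m) - cF (sh1 t1)
  \/ z = mulF (XF X1m) (XF X1p) - cF (sh1i t1)
  \/ z = mulF (XF X2p) (XF X2m) - cF (sh2 t2)
  \/ z = mulF (XF X2m) (XF X2p) - cF (sh2i t2)
  \/ z = mulF (XF X1p) (XF X2m) - mulF (XF X2m) (XF X1p)
  \/ z = mulF (XF X1m) (XF X2p) - mulF (XF X2p) (XF X1m).

(* kernel of F ->> TGWC *)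
Definition tgwc_ker : F -> Prop := idealF_gen tgwc_rels.

(* J is (the preimage in F of) a graded ideal of the TGWC meeting its
   degree-zero component trivially *)
Definition good_idealF (J : F -> Prop) : Prop :=
  [/\ is_idealF J, (forall x, tgwc_ker x -> J x),
      (forall d x, J x -> J (compF d x)) &
      (forall y, homogF (0, 0) y -> J y -> tgwc_ker y)].

(* kernel of F ->> TGWA : (preimage of) the sum of all such graded ideals *)
Definition tgwa_ker : F -> Prop :=
  idealF_gen (fun y => exists J, good_idealF J /\ J y).

End SkewFree.

(* An isomorphism of Z^2-graded R-rings between the quotients F/K and F/K'
   (K, K' two-sided ideals of F), described on representatives:
   f : F -> F induces a well-defined map F/K -> F/K' which is bijective,
   additive, multiplicative, restricts to the identity on (the image of) R,
   and maps the degree-d component into the degree-d component. *)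
Definition graded_Rring_iso (k : fieldType) (R : algType k)
    (sh1 sh1i sh2 sh2i : R -> R) (K K' : F R -> Prop) (f : F R -> F R) : Prop :=
  let mul := mulF sh1 sh1i sh2 sh2i in
     (forall x y, K (x - y) -> K' (f x - f y))
  /\ (forall x y, K' (f x - f y) -> K (x - y))
  /\ (forall y, exists x, K' (f x - y))
  /\ (forall x y, K' (f (x + y) - (f x + f y)))
  /\ (forall x y, K' (f (mul x y) - mul (f x) (f y)))
  /\ (forall r, K' (f (cF r) - cF r))
  /\ (forall d x, homogF d x -> exists y, homogF d y /\ K' (f x - y)).

From HB Require Import structures.
From mathcomp Require Import all_boot all_order all_algebra.
From mathcomp Require Import finmap.
From mathcomp.multinomials Require Import monalg.

Set Implicit Arguments.
Unset Strict Implicit.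
Unset Printing Implicit Defensive.

Import GRing.Theory.
Local Open Scope ring_scope.

(* Rescaling words by central units, r X_w |-> r h(w) X_w, is a graded
   automorphism of the skew free ring F as soon as h is a cocycle,
   h(uv) = h(u) sigma_u(h(v)), and such an h is determined by its values on
   the four letters.  Giving X_1^- the weight sigma_1^{-1/2}(s_1^{-1}), X_2^+
   the weight sigma_2^{1/2}(s_2^{-1}) and X_1^+, X_2^- the weight 1 turns each
   defining relation of the TGWC for t into a unit multiple of the matching
   relation for t' = s t; for [X_1^-, X_2^+] = 0 this is exactly the
   consistency equation for s.  The inverse rescaling goes back, so the
   automorphism matches the TGWC kernels, hence the graded ideals meeting
   degree zero trivially, hence the TGWA kernels. *)

Section CentralUnits.
Variable R : pzRingType.

Definition central (z : R) := forall r, GRing.comm z r.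

Lemma central1 : central 1.
Proof. by move=> r; rewrite /GRing.comm mul1r mulr1. Qed.

Lemma centralM a b : central a -> central b -> central (a * b).
Proof. by move=> ca cb r; rewrite /GRing.comm -mulrA cb mulrA ca mulrA. Qed.

Lemma central_inv s u : central s -> s * u = 1 -> u * s = 1 -> central u.
Proof.
move=> cs su us r; rewrite /GRing.comm.
by rewrite -[u * r]mulr1 -su mulrA -(mulrA u) -cs mulrA us mul1r.
Qed.

Lemma eq_mul_of_inv (a b c d a' b' c' d' : R) : central b -> central d ->
  a * a' = 1 -> b * b' = 1 -> c' * c = 1 -> d' * d = 1 ->
  a' * b' = c' * d' -> a * b = c * d.
Proof.
move=> cb cd aa' bb' c'c d'd e.
have abV : a * b * (a' * b') = 1 by rewrite mulrA -(mulrA a) cb mulrA aa' mul1r bb'.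
have cdV : c' * d' * (c * d) = 1.
  by rewrite -cd mulrA -(mulrA c') d'd mulr1 c'c.
by rewrite -[a * b]mulr1 -cdV mulrA -e abV mul1r.
Qed.

Definition surj_rmorph (f : R -> R) :=
  [/\ {morph f : x y / x + y}, {morph f : x y / x * y}, f 1 = 1 &
      exists g, cancel g f].

Lemma surj_rmorph0 f : surj_rmorph f -> f 0 = 0.
Proof. by case=> fD _ _ _; apply: (@addrI _ (f 0)); rewrite -fD !addr0. Qed.

Lemma surj_rmorph_central f z : surj_rmorph f -> central z -> central (f z).
Proof. by case=> _ fM _ [g gK] cz r; rewrite /GRing.comm -(gK r) -!fM cz. Qed.

Lemma surj_rmorph_mul1 f a b : surj_rmorph f -> a * b = 1 -> f a * f b = 1.
Proof. by case=> _ fM f1 _ ab; rewrite -fM ab f1. Qed.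

Lemma surj_rmorph_id : surj_rmorph id.
Proof. by split => //; exists id. Qed.

Lemma surj_rmorph_comp f g : surj_rmorph f -> surj_rmorph g -> surj_rmorph (f \o g).
Proof.
case=> fD fM f1 [f' f'K] [gD gM g1 [g' g'K]]; split => /=.
- by move=> x y /=; rewrite gD fD.
- by move=> x y /=; rewrite gM fM.
- by rewrite g1 f1.
- by exists (g' \o f') => x /=; rewrite g'K f'K.
Qed.

Lemma can_surj_rmorph f g : surj_rmorph f -> cancel f g -> cancel g f ->
  surj_rmorph g.
Proof.
case=> fD fM f1 _ fK gK; split.
- by move=> x y; apply: (can_inj fK); rewrite fD !gK.
- by move=> x y; apply: (can_inj fK); rewrite fM !gK.
- by apply: (can_inj fK); rewrite f1 gK.
- by exists f.
Qed.

Lemma rmorph_surj (f : {rmorphism R -> R}) g : cancel g f -> surj_rmorph f.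
Proof. by move=> gK; split; [exact: rmorphD|exact: rmorphM|exact: rmorph1|exists g]. Qed.

End CentralUnits.

Section Rescaling.
Variables (k : fieldType) (R : algType k).

Definition rescaleF (h : word -> R) (x : F R) : F R :=
  \sum_(w <- msupp x) << x@_w * h w *g w >>.

Lemma mcoeff_sum_msupp (x : F R) (f : word -> R) m :
  (forall w, w \notin msupp x -> f w = 0) ->
  (\sum_(w <- msupp x) << f w *g w >>)@_m = f m.
Proof.
move=> f0; rewrite raddf_sum /=.
have [mx|mx] := boolP (m \in msupp x).
  rewrite (big_fsetD1 m) //= mcoeffUU big1_fset ?addr0 // => w.
  by rewrite in_fsetD1 mcoeffU; case: eqP => // -> /andP[/eqP].
rewrite big1_fset ?f0 // => w wx _; rewrite mcoeffU; case: eqP => // ew.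
by rewrite -ew wx in mx.
Qed.

Lemma mcoeff_rescaleF h x m : (rescaleF h x)@_m = x@_m * h m.
Proof. by rewrite mcoeff_sum_msupp // => w /mcoeff_outdom ->; rewrite mul0r. Qed.

Lemma rescaleFD h : {morph rescaleF h : x y / x + y}.
Proof.
by move=> x y; apply/malgP => m; rewrite mcoeffD !mcoeff_rescaleF mcoeffD mulrDl.
Qed.

Lemma rescaleF0 h : rescaleF h 0 = 0.
Proof. by apply/malgP => m; rewrite mcoeff_rescaleF !mcoeff0 mul0r. Qed.

Lemma rescaleFN h : {morph rescaleF h : x / - x}.
Proof.
by move=> x; apply/malgP => m; rewrite mcoeffN !mcoeff_rescaleF mcoeffN mulNr.
Qed.

Lemma rescaleFB h : {morph rescaleF h : x y / x - y}.
Proof. by move=> x y; rewrite rescaleFD rescaleFN. Qed.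

Lemma rescaleFU h c w : rescaleF h << c *g w >> = << c * h w *g w >>.
Proof.
apply/malgP => m; rewrite mcoeff_rescaleF !mcoeffU.
by case: eqP => [->|] //; rewrite mul0r.
Qed.

Lemma rescaleF_sum h (I : Type) (s : seq I) (P : pred I) (G : I -> F R) :
  rescaleF h (\sum_(i <- s | P i) G i) = \sum_(i <- s | P i) rescaleF h (G i).
Proof. exact: (big_morph _ (rescaleFD h) (rescaleF0 h)). Qed.

Lemma msupp_rescaleF h x : (msupp (rescaleF h x) `<=` msupp x)%fset.
Proof.
apply/fsubsetP => m; rewrite -!mcoeff_neq0 mcoeff_rescaleF.
by apply: contra => /eqP ->; rewrite mul0r.
Qed.

Lemma rescaleFK h h' : (forall w, h w * h' w = 1) -> cancel (rescaleF h) (rescaleF h').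
Proof.
by move=> hh' x; apply/malgP => m; rewrite !mcoeff_rescaleF -mulrA hh' mulr1.
Qed.

Lemma mcoeff_compF d (x : F R) m :
  (compF d x)@_m = if deg_word m == d then x@_m else 0.
Proof.
rewrite /compF big_mkcond /=.
rewrite (eq_bigr (fun w => << (if deg_word w == d then x@_w else 0) *g w >>)).
  by rewrite mcoeff_sum_msupp // => w /mcoeff_outdom ->; case: ifP.
by move=> w _; case: ifP => //; rewrite monalgU0.
Qed.

Lemma rescaleF_compF h d : {morph rescaleF h : x / compF d x}.
Proof.
move=> x; apply/malgP => m; rewrite mcoeff_rescaleF !mcoeff_compF mcoeff_rescaleF.
by case: ifP => //; rewrite mul0r.
Qed.

Lemma homogF_rescaleF h d x : homogF d x -> homogF d (rescaleF h x).
Proof. by move=> hx w /(fsubsetP (msupp_rescaleF h x)) /hx. Qed.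

End Rescaling.

Section Twisting.
Variables (k : fieldType) (R : algType k).
Variables (sh1 sh2 : {lrmorphism R -> R}) (sh1i sh2i : R -> R).
Hypotheses (Hsh1K : cancel sh1 sh1i) (Hsh1iK : cancel sh1i sh1)
  (Hsh2K : cancel sh2 sh2i) (Hsh2iK : cancel sh2i sh2).

Local Notation mul := (mulF sh1 sh1i sh2 sh2i).
Local Notation la := (letter_aut sh1 sh1i sh2 sh2i).
Local Notation wa := (word_aut sh1 sh1i sh2 sh2i).
Local Notation ideal_gen := (idealF_gen sh1 sh1i sh2 sh2i).

Lemma surj_rmorph_sh1 : surj_rmorph sh1. Proof. exact: rmorph_surj Hsh1iK. Qed.
Lemma surj_rmorph_sh2 : surj_rmorph sh2. Proof. exact: rmorph_surj Hsh2iK. Qed.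

Lemma surj_rmorph_sh1i : surj_rmorph sh1i.
Proof. exact: can_surj_rmorph surj_rmorph_sh1 Hsh1K Hsh1iK. Qed.

Lemma surj_rmorph_sh2i : surj_rmorph sh2i.
Proof. exact: can_surj_rmorph surj_rmorph_sh2 Hsh2K Hsh2iK. Qed.

Lemma surj_rmorph_letter_aut a : surj_rmorph (la a).
Proof.
case: a => [[] []]; apply: surj_rmorph_comp;
  by [exact: surj_rmorph_sh1|exact: surj_rmorph_sh2
     |exact: surj_rmorph_sh1i|exact: surj_rmorph_sh2i].
Qed.

Lemma surj_rmorph_word_aut u : surj_rmorph (wa u).
Proof.
elim: u => [|a u IH] /=; first exact: surj_rmorph_id.
exact: surj_rmorph_comp (surj_rmorph_letter_aut a) IH.
Qed.

Lemma mulF_fsubset (d1 d2 : {fset word}) (x y : F R) :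
  (msupp x `<=` d1)%fset -> (msupp y `<=` d2)%fset ->
  mul x y = \sum_(u <- d1) \sum_(v <- d2) << x@_u * wa u (y@_v) *g (u ++ v) >>.
Proof.
move=> le_d1 le_d2; rewrite /mulF (big_fset_incl _ le_d1) /=.
  apply/eq_bigr=> u _; apply/big_fset_incl => // v _ /mcoeff_outdom ->.
  by rewrite (surj_rmorph0 (surj_rmorph_word_aut u)) mulr0 monalgU0.
move=> u _ /mcoeff_outdom xu.
by rewrite big1 => // v _; rewrite xu mul0r monalgU0.
Qed.

Lemma mulF_XF a b : mul (XF R a) (XF R b) = << 1 *g [:: a; b] >>.
Proof.
rewrite (mulF_fsubset msuppU_le msuppU_le) !big_seq_fset1 !mcoeffUU.
by have [_ _ -> _] := surj_rmorph_word_aut [:: a]; rewrite mulr1.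
Qed.

Lemma mcoeff_mulF_cF r (z : F R) m : (mul (cF r) z)@_m = r * z@_m.
Proof.
rewrite (mulF_fsubset msuppU_le (fsubset_refl _)) !big_seq_fset1 mcoeffUU /=.
by rewrite mcoeff_sum_msupp // => w /mcoeff_outdom ->; rewrite mulr0.
Qed.

Definition word_cocycle (h : word -> R) :=
  forall u v, h (u ++ v) = h u * wa u (h v).

Lemma rescaleF_mulF h : word_cocycle h -> (forall w, central (h w)) ->
  {morph rescaleF h : x y / mul x y}.
Proof.
move=> hcat hc x y.
rewrite [RHS](mulF_fsubset (msupp_rescaleF h x) (msupp_rescaleF h y)).
rewrite /mulF rescaleF_sum; apply: eq_bigr => u _.
rewrite rescaleF_sum; apply: eq_bigr => v _.
rewrite rescaleFU !mcoeff_rescaleF hcat.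
have [_ waM _ _] := surj_rmorph_word_aut u; rewrite waM.
by rewrite !mulrA -(mulrA (x@_u) (wa u (y@_v))) -hc !mulrA.
Qed.

Lemma idealF_gen_rescaleF h (S S' : F R -> Prop) :
  word_cocycle h -> (forall w, central (h w)) ->
  (forall z, S z -> ideal_gen S' (rescaleF h z)) ->
  forall z, ideal_gen S z -> ideal_gen S' (rescaleF h z).
Proof.
move=> hcat hc HS z; elim=> {z} [x /HS //|||||].
- by rewrite rescaleF0; apply: igen_0.
- by move=> x y _ Hx _ Hy; rewrite rescaleFD; apply: igen_add.
- by move=> x _ Hx; rewrite rescaleFN; apply: igen_opp.
- by move=> a x _ Hx; rewrite rescaleF_mulF //; apply: igen_lmul.
- by move=> a x _ Hx; rewrite rescaleF_mulF //; apply: igen_rmul.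
Qed.

Fixpoint cocycle_of (c : letter -> R) (w : word) : R :=
  if w is a :: w' then c a * la a (cocycle_of c w') else 1.

Lemma cocycle_ofP c : word_cocycle (cocycle_of c).
Proof.
elim=> [|a u IH] v /=; first by rewrite mul1r.
by rewrite IH; have [_ laM _ _] := surj_rmorph_letter_aut a; rewrite laM mulrA.
Qed.

Lemma cocycle_of2 c a b : cocycle_of c [:: a; b] = c a * la a (c b).
Proof. by have [_ _ /= -> _] := surj_rmorph_letter_aut b; rewrite mulr1. Qed.

Lemma cocycle_of_central c : (forall a, central (c a)) ->
  forall w, central (cocycle_of c w).
Proof.
move=> cc; elim=> [|a w IH] /=; first exact: central1.
exact: centralM (cc a) (surj_rmorph_central (surj_rmorph_letter_aut a) IH).
Qed.

Lemma cocycle_of_mul1 c c' : (forall a, central (c a)) ->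
  (forall a, c a * c' a = 1) -> forall w, cocycle_of c w * cocycle_of c' w = 1.
Proof.
move=> cc cc'; elim=> [|a w IH] /=; first by rewrite mulr1.
have cw := surj_rmorph_central (surj_rmorph_letter_aut a) (cocycle_of_central cc w).
have [_ laM la1 _] := surj_rmorph_letter_aut a.
by rewrite -mulrA (mulrA (la a _)) cw -!mulrA -laM IH la1 mulr1 cc'.
Qed.

Lemma rescaleF_binomial h r0 w1 w2 r r' : h w1 = r0 -> r * h w2 = r0 * r' ->
  rescaleF h (<< 1 *g w1 >> - << r *g w2 >>) =
  mul (cF r0) (<< 1 *g w1 >> - << r' *g w2 >>).
Proof.
move=> E1 E2; apply/malgP => m.
rewrite mcoeff_mulF_cF mcoeff_rescaleF !mcoeffB !mcoeffU mulrBl mulrBr.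
case: eqP => e1; case: eqP => e2 /=; subst; rewrite ?mulr1n ?mulr0n;
  by rewrite ?E1 ?E2 ?mul1r ?mulr1 ?mulr0 ?mul0r.
Qed.

Definition twist (a1 a2 : R) (l : letter) : R :=
  match l with
  | (false, false) => sh1i a1
  | (true, true) => sh2 a2
  | _ => 1
  end.

Lemma twist_central a1 a2 : central a1 -> central a2 ->
  forall l, central (twist a1 a2 l).
Proof.
move=> c1 c2 [[] []] /=; try exact: central1.
  exact: surj_rmorph_central surj_rmorph_sh2 c2.
exact: surj_rmorph_central surj_rmorph_sh1i c1.
Qed.

Lemma twist_mul1 a1 a2 b1 b2 : a1 * b1 = 1 -> a2 * b2 = 1 ->
  forall l, twist a1 a2 l * twist b1 b2 l = 1.
Proof.
move=> e1 e2 [[] []] /=; rewrite ?mulr1 //.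
  exact: surj_rmorph_mul1 surj_rmorph_sh2 e2.
exact: surj_rmorph_mul1 surj_rmorph_sh1i e1.
Qed.

Lemma rescaleF_tgwc_rels t1 t2 a1 a2 b1 b2 : a1 * b1 = 1 -> a2 * b2 = 1 ->
  cocycle_of (twist a1 a2) [:: X1m; X2p] = cocycle_of (twist a1 a2) [:: X2p; X1m] ->
  forall z, tgwc_rels sh1 sh1i sh2 sh2i t1 t2 z ->
  tgwc_ker sh1 sh1i sh2 sh2i (b1 * t1) (b2 * t2) (rescaleF (cocycle_of (twist a1 a2)) z).
Proof.
move=> e1 e2 eq_weights z.
have [_ sh1iM sh1i1 _] := surj_rmorph_sh1i; have [_ sh2iM sh2i1 _] := surj_rmorph_sh2i.
have sh1_1 : sh1 1 = 1 by exact: rmorph1.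
have sh2_1 : sh2 1 = 1 by exact: rmorph1.
rewrite /cF; move=> [->|[->|[->|[->|[->|->]]]]].
- rewrite (mulF_XF X1p X1m) (@rescaleF_binomial _ (sh1 a1) _ _ _ (sh1 (b1 * t1))).
  + by rewrite -(mulF_XF X1p X1m); apply/igen_lmul/igen_in; left.
  + by rewrite cocycle_of2 /= mul1r Hsh1iK.
  + by rewrite /= mulr1 rmorphM mulrA -rmorphM e1 rmorph1 mul1r.
- rewrite (mulF_XF X1m X1p) (@rescaleF_binomial _ (sh1i a1) _ _ _ (sh1i (b1 * t1))).
  + by rewrite -(mulF_XF X1m X1p); apply/igen_lmul/igen_in; right; left.
  + by rewrite cocycle_of2 /= sh1i1 sh1i1 mulr1.
  + by rewrite /= mulr1 sh1iM mulrA -sh1iM e1 sh1i1 mul1r.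
- rewrite (mulF_XF X2p X2m) (@rescaleF_binomial _ (sh2 a2) _ _ _ (sh2 (b2 * t2))).
  + by rewrite -(mulF_XF X2p X2m); apply/igen_lmul/igen_in; right; right; left.
  + by rewrite cocycle_of2 /= sh2_1 sh2_1 mulr1.
  + by rewrite /= mulr1 rmorphM mulrA -rmorphM e2 rmorph1 mul1r.
- rewrite (mulF_XF X2m X2p) (@rescaleF_binomial _ (sh2i a2) _ _ _ (sh2i (b2 * t2))).
  + by rewrite -(mulF_XF X2m X2p); apply/igen_lmul/igen_in; right; right; right; left.
  + by rewrite cocycle_of2 /= mul1r Hsh2K.
  + by rewrite /= mulr1 sh2iM mulrA -sh2iM e2 sh2i1 mul1r.
- rewrite (mulF_XF X1p X2m) (mulF_XF X2m X1p) (@rescaleF_binomial _ 1 _ _ _ 1).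
  + rewrite -(mulF_XF X1p X2m) -(mulF_XF X2m X1p).
    by apply/igen_lmul/igen_in; right; right; right; right; left.
  + by rewrite cocycle_of2 /= sh1_1 sh1_1 mulr1.
  + by rewrite cocycle_of2 /= sh2i1 sh2i1 !mulr1.
- rewrite (mulF_XF X1m X2p) (mulF_XF X2p X1m).
  rewrite (@rescaleF_binomial _ (cocycle_of (twist a1 a2) [:: X1m; X2p]) _ _ _ 1) //.
    rewrite -(mulF_XF X1m X2p) -(mulF_XF X2p X1m).
    by apply/igen_lmul/igen_in; right; right; right; right; right.
  by rewrite mul1r mulr1 eq_weights.
Qed.

Lemma rescaleF_tgwa_ker h h' t1 t2 t1' t2' :
  word_cocycle h -> word_cocycle h' ->
  (forall w, central (h w)) -> (forall w, central (h' w)) ->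
  (forall w, h w * h' w = 1) -> (forall w, h' w * h w = 1) ->
  (forall z, tgwc_rels sh1 sh1i sh2 sh2i t1 t2 z ->
     tgwc_ker sh1 sh1i sh2 sh2i t1' t2' (rescaleF h z)) ->
  (forall z, tgwc_rels sh1 sh1i sh2 sh2i t1' t2' z ->
     tgwc_ker sh1 sh1i sh2 sh2i t1 t2 (rescaleF h' z)) ->
  forall z, tgwa_ker sh1 sh1i sh2 sh2i t1 t2 z ->
  tgwa_ker sh1 sh1i sh2 sh2i t1' t2' (rescaleF h z).
Proof.
move=> hcat h'cat hc h'c hh' h'h G G'.
have ker_hh' := idealF_gen_rescaleF hcat hc G.
have ker_h'h := idealF_gen_rescaleF h'cat h'c G'.
apply: idealF_gen_rescaleF => // y [J [[[J0 JD JN JL JR] Jker Jcomp Jdeg0] Jy]].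
apply: igen_in; exists (fun z => J (rescaleF h' z)).
split; last by rewrite rescaleFK.
split; [split| | |].
- by rewrite rescaleF0.
- by move=> x x'; rewrite rescaleFD; apply: JD.
- by move=> x; rewrite rescaleFN; apply: JN.
- by move=> a x; rewrite rescaleF_mulF //; apply: JL.
- by move=> a x; rewrite rescaleF_mulF //; apply: JR.
- by move=> x /ker_h'h; apply: Jker.
- by move=> d x; rewrite rescaleF_compF; apply: Jcomp.
- move=> x hx /(Jdeg0 _ (homogF_rescaleF (h:=h') hx)) /ker_hh'.
  by rewrite rescaleFK.
Qed.

Lemma rescaleF_graded_iso h h' (K K' : F R -> Prop) :
  word_cocycle h -> (forall w, central (h w)) -> h [::] = 1 ->
  (forall w, h w * h' w = 1) -> (forall w, h' w * h w = 1) -> K' 0 ->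
  (forall z, K z -> K' (rescaleF h z)) -> (forall z, K' z -> K (rescaleF h' z)) ->
  graded_Rring_iso sh1 sh1i sh2 sh2i K K' (rescaleF h).
Proof.
move=> hcat hc h1 hh' h'h K'0 KK' K'K.
split; [|split; [|split; [|split; [|split; [|split]]]]].
- by move=> x y /KK'; rewrite rescaleFB.
- by move=> x y; rewrite -rescaleFB => /K'K; rewrite rescaleFK.
- by move=> y; exists (rescaleF h' y); rewrite rescaleFK // subrr.
- by move=> x y; rewrite rescaleFD subrr.
- by move=> x y; rewrite rescaleF_mulF // subrr.
- by move=> r; rewrite /cF rescaleFU h1 mulr1 subrr.
- move=> d x hx; exists (rescaleF h x); rewrite subrr.
  by split=> //; exact: homogF_rescaleF.
Qed.

Definition consistent (s1 s2 : R) := sh2 s1 * sh1 s2 = sh2i s1 * sh1i s2.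

Lemma consistent_inv s1 s2 u1 u2 : central s2 ->
  s1 * u1 = 1 -> u1 * s1 = 1 -> s2 * u2 = 1 -> u2 * s2 = 1 ->
  consistent s1 s2 -> consistent u1 u2.
Proof.
move=> cs2 s1u1 u1s1 s2u2 u2s2; have cu2 := central_inv cs2 s2u2 u2s2.
apply: eq_mul_of_inv.
- exact: surj_rmorph_central surj_rmorph_sh1 cu2.
- exact: surj_rmorph_central surj_rmorph_sh1i cu2.
- exact: surj_rmorph_mul1 surj_rmorph_sh2 u1s1.
- exact: surj_rmorph_mul1 surj_rmorph_sh1 u2s2.
- exact: surj_rmorph_mul1 surj_rmorph_sh2i s1u1.
- exact: surj_rmorph_mul1 surj_rmorph_sh1i s2u2.
Qed.

Hypothesis Hcomm : forall r, sh1 (sh2 r) = sh2 (sh1 r).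

Lemma sh1i_sh2 x : sh1i (sh2 x) = sh2 (sh1i x).
Proof. by apply: (can_inj Hsh1K); rewrite Hsh1iK Hcomm Hsh1iK. Qed.

Lemma consistent_twist s1 s2 : central s2 -> consistent s1 s2 ->
  cocycle_of (twist s1 s2) [:: X1m; X2p] = cocycle_of (twist s1 s2) [:: X2p; X1m].
Proof.
move=> cs2; rewrite !cocycle_of2 /=.
have [_ sh1iM _ _] := surj_rmorph_sh1i; have [_ sh2M _ _] := surj_rmorph_sh2.
move/(congr1 (sh2 \o sh1i)) => /=; rewrite !sh1iM !sh2M Hsh1K.
rewrite (sh1i_sh2 s1) -(sh1i_sh2 (sh2i s1)) Hsh2iK.
rewrite -(sh1i_sh2 (sh1i s2)) -(sh1i_sh2 s2) => <-.
by rewrite (surj_rmorph_central surj_rmorph_sh2 cs2).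
Qed.

Lemma tgwa_graded_iso_rescaleF t1 t2 s1 s2 u1 u2 : central s1 -> central s2 ->
  s1 * u1 = 1 -> u1 * s1 = 1 -> s2 * u2 = 1 -> u2 * s2 = 1 -> consistent s1 s2 ->
  graded_Rring_iso sh1 sh1i sh2 sh2i
    (tgwa_ker sh1 sh1i sh2 sh2i t1 t2) (tgwa_ker sh1 sh1i sh2 sh2i (s1 * t1) (s2 * t2))
    (rescaleF (cocycle_of (twist u1 u2))).
Proof.
move=> cs1 cs2 s1u1 u1s1 s2u2 u2s2 Hs.
have cu1 := central_inv cs1 s1u1 u1s1; have cu2 := central_inv cs2 s2u2 u2s2.
have Hu := consistent_inv cs2 s1u1 u1s1 s2u2 u2s2 Hs.
have cu := twist_central cu1 cu2; have cs := twist_central cs1 cs2.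
have hh' := cocycle_of_mul1 cu (twist_mul1 u1s1 u2s2).
have h'h := cocycle_of_mul1 cs (twist_mul1 s1u1 s2u2).
have G := rescaleF_tgwc_rels (t1 := t1) (t2 := t2) u1s1 u2s2 (consistent_twist cu2 Hu).
have G' z : tgwc_rels sh1 sh1i sh2 sh2i (s1 * t1) (s2 * t2) z ->
    tgwc_ker sh1 sh1i sh2 sh2i t1 t2 (rescaleF (cocycle_of (twist s1 s2)) z).
  move/(rescaleF_tgwc_rels s1u1 s2u2 (consistent_twist cs2 Hs)).
  by rewrite !mulrA u1s1 u2s2 !mul1r.
apply: (rescaleF_graded_iso (cocycle_ofP _) (cocycle_of_central cu) _ hh' h'h).
- by [].
- exact: igen_0.
- exact: (rescaleF_tgwa_ker (cocycle_ofP _) (cocycle_ofP _)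
    (cocycle_of_central cu) (cocycle_of_central cs) hh' h'h G G').
- exact: (rescaleF_tgwa_ker (cocycle_ofP _) (cocycle_ofP _)
    (cocycle_of_central cs) (cocycle_of_central cu) h'h hh' G' G).
Qed.

End Twisting.

Theorem mainTheorem10 (k : fieldType) (R : algType k)
  (sh1 sh2 : {lrmorphism R -> R}) (sh1i sh2i : R -> R)
  (Hsh1K : cancel sh1 sh1i) (Hsh1iK : cancel sh1i sh1)
  (Hsh2K : cancel sh2 sh2i) (Hsh2iK : cancel sh2i sh2)
  (Hcomm : forall r, sh1 (sh2 r) = sh2 (sh1 r))
  (t1 t2 : R)
  (Ht1c : forall r, t1 * r = r * t1) (Ht2c : forall r, t2 * r = r * t2)
  (Ht1reg : GRing.lreg t1 /\ GRing.rreg t1)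
  (Ht2reg : GRing.lreg t2 /\ GRing.rreg t2)
  (Hcons : sh2 t1 * sh1 t2 = sh2i t1 * sh1i t2)
  (s1 s2 : R)
  (Hs1c : forall r, s1 * r = r * s1) (Hs2c : forall r, s2 * r = r * s2)
  (Hs1u : exists u, s1 * u = 1 /\ u * s1 = 1)
  (Hs2u : exists u, s2 * u = 1 /\ u * s2 = 1)
  (Hs : sh2 s1 * sh1 s2 = sh2i s1 * sh1i s2) :
  exists f : F R -> F R,
    graded_Rring_iso sh1 sh1i sh2 sh2i
      (tgwa_ker sh1 sh1i sh2 sh2i t1 t2)
      (tgwa_ker sh1 sh1i sh2 sh2i (s1 * t1) (s2 * t2)) f.
Proof.
case: Hs1u => u1 [s1u1 u1s1]; case: Hs2u => u2 [s2u2 u2s2].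
exists (rescaleF (cocycle_of sh1 sh2 sh1i sh2i (twist sh2 sh1i u1 u2))).
exact: (tgwa_graded_iso_rescaleF Hsh1K Hsh1iK Hsh2K Hsh2iK Hcomm t1 t2 Hs1c Hs2c s1u1 u1s1 s2u2 u2s2 Hs).
Qed.
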